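(* For every $m\ge1$ and every $n\ge\lfloor m/2\rfloor+m$, there exist $m$ preference lists on the ground set $\{1,\ldots,n\}$ for which the number of distinct images of efficient matchings is $\Omega\!\left(\frac{2^m}{\sqrt{m}}\right)$ (with the implied constant independent of $m,n$).
   Context: A system of $m$ preference lists on $\{1,\ldots,n\}$ assigns to each $i\in\{1,\ldots,m\}$ a list $L(i)$, a strict total ordering of $\{1,\ldots,n\}$. A matching is an injective map $\pi:\{1,\ldots,m\}\to\{1,\ldots,n\}$, and its image is the set $\pi(\{1,\ldots,m\})$. A matching $\pi$ is better than a distinct matching $\sigma$ if for each $i$ either $\pi(i)=\sigma(i)$ or $\pi(i)$ appears before $\sigma(i)$ in $L(i)$. A matching is efficient if no matching is better than it. *)

From mathcomp Require Import all_boot all_fingroup.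
Set Implicit Arguments. Unset Strict Implicit. Unset Printing Implicit Defensive.

(* Ground set {1,...,n} is modelled by 'I_n, agents {1,...,m} by 'I_m.
   A preference list L(i) (a strict total order of 'I_n) is encoded by the
   bijection [pos : {perm 'I_n}] giving the position of each element in the
   list: x appears before y in L(i) iff pos x < pos y. *)
Definition prefsys (m n : nat) := {ffun 'I_m -> {perm 'I_n}}.

Definition before m n (L : prefsys m n) (i : 'I_m) (x y : 'I_n) : bool :=
  L i x < L i y.

Definition matching m n (p : {ffun 'I_m -> 'I_n}) : bool := injectiveb p.

Definition image m n (p : {ffun 'I_m -> 'I_n}) : {set 'I_n} := p @: 'I_m.

Definition better m n (L : prefsys m n) (p s : {ffun 'I_m -> 'I_n}) : bool :=
  [&& matching p, matching s, p != s &
      [forall i, (p i == s i) || before L i (p i) (s i)]].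

Definition efficient m n (L : prefsys m n) (p : {ffun 'I_m -> 'I_n}) : bool :=
  matching p && [forall s, ~~ better L s p].

Definition num_eff_images m n (L : prefsys m n) : nat :=
  #|[set image p | p in [pred p | efficient L p]]|.

(* Let k = m/2.  Agent i ranks the k common items 0, ..., k-1 first and then
   an item k + i of its own.  For every k-set S of agents, the matching that
   sends S increasingly onto the common items and every other agent to its own
   item is efficient: in a better matching the agents of S can only move to
   common items, so they use all of them and everybody else keeps its own item;
   comparing the sums of the positions on S then forces equality.  The image
   of this matching determines S, whence at least C(m, m/2) efficient images,
   and C(m, m/2) >= 2^m / (2 sqrt m) follows by induction from
   (k+1) C(2k+2, k+1) = 2 (2k+1) C(2k, k). *)

From Pilot Require Import Defs.
From mathcomp Require Import all_boot all_fingroup zify.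
From Stdlib Require Import Reals Lra.
(* Reals rebinds [^] on nat to [Nat.pow]; restore ssrnat's [expn]. *)
Import ssrnat.

Set Implicit Arguments.
Unset Strict Implicit.
Unset Printing Implicit Defensive.

Lemma card_ord_lt N k : k <= N -> #|[set y : 'I_N | y < k]| = k.
Proof.
move=> kN; rewrite -sum1_card (eq_bigl (fun y : 'I_N => y < k)) => [|y]; last by rewrite inE.
by rewrite (big_ord_narrow kN) sum1_card card_ord.
Qed.

Lemma leq_imset_eq (T : finType) N (S : {set T}) (f g : T -> 'I_N) :
  {in S &, injective f} -> {in S &, injective g} -> f @: S = g @: S ->
  {in S, forall i, f i <= g i} -> {in S, f =1 g}.
Proof.
move=> f_inj g_inj fSgS le_fg.
have sum_fg : \sum_(i in S) nat_of_ord (f i) = \sum_(i in S) nat_of_ord (g i).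
  rewrite -(big_imset (fun y : 'I_N => nat_of_ord y) f_inj).
  by rewrite -(big_imset (fun y : 'I_N => nat_of_ord y) g_inj) fSgS.
have /leqif_sum [_] : forall i, i \in S -> f i <= g i ?= iff (f i == g i :> nat).
  by move=> i iS; split; [exact: le_fg|].
rewrite sum_fg eqxx => /esym/forall_inP eq_fg i iS.
by apply: val_inj; apply/eqP; exact: eq_fg.
Qed.

Section SwapPreferences.

Variables m n k : nat.
Hypothesis k_m_le : k + m <= n.+1.

Lemma k_le : k <= n.+1.
Proof. exact: leq_trans (leq_addr m k) k_m_le. Qed.

Lemma own_lt (i : 'I_m) : k + i < n.+1.
Proof. by apply: leq_trans k_m_le; rewrite ltn_add2l. Qed.

Lemma k_lt (i : 'I_m) : k < n.+1.
Proof. exact: leq_ltn_trans (leq_addr i k) (own_lt i). Qed.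

Definition own (i : 'I_m) : 'I_n.+1 := inord (k + i).

Lemma own_val i : own i = k + i :> nat.
Proof. exact: inordK (own_lt i). Qed.

(* As a position map, [tperm (inord k) (own i)] leaves the common items at
   positions 0, ..., k-1 and moves [own i] to position k. *)
Definition swap_prefs : prefsys m n.+1 := [ffun i => tperm (inord k) (own i)].

Lemma swap_prefs_low i (y : 'I_n.+1) : y < k -> swap_prefs i y = y.
Proof.
move=> y_lt; rewrite ffunE tpermD //; apply: contraTneq y_lt => <-.
  by rewrite inordK ?ltnn // (k_lt i).
by rewrite own_val -leqNgt leq_addr.
Qed.

Lemma swap_prefs_own i : swap_prefs i (own i) = k :> nat.
Proof. by rewrite ffunE tpermR inordK // (k_lt i). Qed.

Lemma ltn_swap_prefs i (y : 'I_n.+1) : (swap_prefs i y < k) = (y < k).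
Proof.
have [y_lt|y_ge] := ltnP y k; first by rewrite swap_prefs_low.
apply/negbTE; rewrite -leqNgt ffunE; case: tpermP => [_|_|//].
  by rewrite own_val leq_addr.
by rewrite inordK // (k_lt i).
Qed.

Definition low : {set 'I_n.+1} := [set y : 'I_n.+1 | y < k].

Section SetMatching.

Variable S : {set 'I_m}.
Hypothesis card_S : #|S| = k.

Definition set_matching : {ffun 'I_m -> 'I_n.+1} :=
  [ffun i => if i \in S then inord (index i (enum S)) else own i].

Lemma index_enum_lt i : i \in S -> index i (enum S) < k.
Proof. by rewrite -card_S cardE index_mem mem_enum. Qed.

Lemma set_matching_in i : i \in S -> set_matching i = index i (enum S) :> nat.
Proof.
move=> iS; rewrite ffunE iS inordK //.
exact: leq_trans (index_enum_lt iS) k_le.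
Qed.

Lemma set_matching_low i : i \in S -> set_matching i < k.
Proof. by move=> iS; rewrite set_matching_in ?index_enum_lt. Qed.

Lemma set_matching_out i : i \notin S -> set_matching i = own i.
Proof. by rewrite ffunE => /negbTE ->. Qed.

Lemma own_notin_low i : own i \notin low.
Proof. by rewrite inE own_val -leqNgt leq_addr. Qed.

Lemma set_matching_inj : injective set_matching.
Proof.
move=> i j; have [iS|iS] := boolP (i \in S); have [jS|jS] := boolP (j \in S).
- move/(congr1 val); rewrite /= !set_matching_in // => /(congr1 (nth i (enum S))).
  by rewrite !nth_index ?mem_enum.
- move=> eq_ij; have := own_notin_low j.
  by rewrite -set_matching_out // -eq_ij inE set_matching_low.
- move=> eq_ij; have := own_notin_low i.
  by rewrite -set_matching_out // eq_ij inE set_matching_low.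
- rewrite !set_matching_out // => /(congr1 (@nat_of_ord _)); rewrite !own_val.
  by move/addnI/val_inj.
Qed.

Lemma imset_low (f : 'I_m -> 'I_n.+1) :
  {in S &, injective f} -> {in S, forall i, f i < k} -> f @: S = low.
Proof.
move=> f_inj f_low; apply/eqP; rewrite eqEcard card_in_imset // card_S.
rewrite /low card_ord_lt ?k_le // leqnn andbT.
by apply/subsetP => _ /imsetP [i iS ->]; rewrite inE f_low.
Qed.

Lemma own_in_image i : (own i \in Defs.image set_matching) = (i \notin S).
Proof.
apply/imsetP/idP => [[j _ own_ij]|iS]; last by exists i; rewrite ?set_matching_out.
have [jS|jS] := boolP (j \in S).
  by have := own_notin_low i; rewrite own_ij inE set_matching_low.
move: own_ij; rewrite set_matching_out // => /(congr1 (@nat_of_ord _)).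
by rewrite !own_val => /addnI/val_inj ->.
Qed.

Section WeaklyBetter.

Variable s : {ffun 'I_m -> 'I_n.+1}.
Hypothesis s_inj : injective s.
Hypothesis s_better :
  forall i, (s i == set_matching i) || before swap_prefs i (s i) (set_matching i).

Lemma better_in i : i \in S -> s i < k /\ s i <= set_matching i.
Proof.
move=> iS; have sm_low := set_matching_low iS.
case/orP: (s_better i) => [/eqP -> //|].
rewrite /before (swap_prefs_low _ sm_low) => lt_s.
have s_low : s i < k by rewrite -(ltn_swap_prefs i) (ltn_trans lt_s).
by move: lt_s; rewrite swap_prefs_low // => /ltnW.
Qed.

Lemma better_imset : s @: S = low.
Proof.
apply: imset_low => [i j _ _ /s_inj //|i iS].
exact: (better_in iS).1.
Qed.

Lemma better_out i : i \notin S -> s i = set_matching i.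
Proof.
move=> iS; case/orP: (s_better i) => [/eqP //|].
rewrite /before set_matching_out // swap_prefs_own ltn_swap_prefs => s_low.
have : s i \in s @: S by rewrite better_imset inE.
by case/imsetP=> j jS /s_inj eq_ij; move: iS; rewrite eq_ij jS.
Qed.

Lemma better_eq : s = set_matching.
Proof.
apply/ffunP => i; have [iS|] := boolP (i \in S); last exact: better_out.
have sm_inj : {in S &, injective set_matching} by move=> j l _ _ /set_matching_inj.
apply: (leq_imset_eq _ sm_inj _ _ iS) => [j l _ _ /s_inj //||j jS].
  by rewrite better_imset imset_low //; exact: set_matching_low.
exact: (better_in jS).2.
Qed.

End WeaklyBetter.

Lemma set_matching_efficient : efficient swap_prefs set_matching.
Proof.
rewrite /efficient /matching (introT (injectiveP _) set_matching_inj).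
apply/forallP => s; apply/negP => /and4P [/injectiveP s_inj _ s_neq /forallP s_better].
by move: s_neq; rewrite (better_eq s_inj s_better) eqxx.
Qed.

End SetMatching.

Lemma image_set_matching_inj :
  {in [set S : {set 'I_m} | #|S| == k] &, injective (fun S => Defs.image (set_matching S))}.
Proof.
move=> S1 S2; rewrite !inE => /eqP card_S1 /eqP card_S2 eq_im; apply/setP => i.
by apply: negb_inj; rewrite -!own_in_image // eq_im.
Qed.

Lemma bin_le_num_eff_images : 'C(m, k) <= num_eff_images swap_prefs.
Proof.
rewrite /num_eff_images -[m in 'C(m, _)]card_ord -card_draws.
rewrite -(card_in_imset image_set_matching_inj); apply: subset_leq_card.
apply/subsetP => _ /imsetP [S + ->]; rewrite inE => /eqP card_S.
by apply/imsetP; exists (set_matching S); rewrite // inE set_matching_efficient.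
Qed.

End SwapPreferences.

Lemma bin_odd_mid k : 'C(k.*2.+1, k.+1) = 'C(k.*2.+1, k).
Proof.
rewrite -bin_sub; last by rewrite -addnn; lia.
congr 'C(_, _); rewrite -addnn; lia.
Qed.

Lemma mul_central_binS k :
  k.+1 * 'C(k.+1.*2, k.+1) = 2 * k.*2.+1 * 'C(k.*2, k).
Proof.
have := mul_bin_diag k.*2.+1 k; rewrite /= bin_odd_mid => diag.
by rewrite -mul_bin_diag /= -mul2n -mulnA -diag mulnA.
Qed.

Lemma central_bin_lb k : 0 < k -> 16 ^ k <= 4 * k * 'C(k.*2, k) ^ 2.
Proof.
case: k => // k _; elim: k => [//|k IH].
rewrite -(leq_pmul2l (ltn0Sn k.+1)).
have -> : k.+2 * (4 * k.+2 * 'C(k.+2.*2, k.+2) ^ 2) = 4 * (k.+2 * 'C(k.+2.*2, k.+2)) ^ 2.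
  by rewrite !expnS expn0; nia.
rewrite mul_central_binS expnS.
move: IH; set C := 'C(_, _); clearbody C; rewrite -!addnn; nia.
Qed.

Lemma bin_mid_lb m : 0 < m -> 4 ^ m <= 4 * m * 'C(m, m./2) ^ 2.
Proof.
rewrite -[m]odd_double_half half_bit_double.
have pow4_double k : 4 ^ k.*2 = 16 ^ k by rewrite -mul2n expnM.
case: (odd m); move: m./2 => k /=.
- have := @central_bin_lb k.+1 isT.
  rewrite doubleS binS bin_odd_mid add1n !expnS pow4_double.
  set C := 'C(_, k); clearbody C; move: (_ ^ k) => X; nia.
- rewrite add0n pow4_double -addnn => k_gt0.
  apply: leq_trans (@central_bin_lb k _) _; first lia.
  by rewrite -addnn leq_mul2r leq_mul2l leq_addr !orbT.
Qed.

Lemma INR_expn a b : INR (a ^ b) = (INR a ^ b)%R.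
Proof. by elim: b => [|b IH] //=; rewrite expnS -multE mult_INR IH. Qed.

Lemma bin_mid_real_lb m : 0 < m ->
  (1/2 * 2 ^ m / sqrt (INR m) <= INR 'C(m, m./2))%R.
Proof.
move=> m_gt0; have PP_le := le_INR _ _ (leP (bin_mid_lb m_gt0)).
have INR4 : INR 4 = 4%R by simpl; lra.
have pow4 : (4 ^ m = 2 ^ m * 2 ^ m)%R.
  by rewrite -Rpow_mult_distr; congr (_ ^ _)%R; lra.
rewrite -!multE !mult_INR !INR_expn INR4 pow4 in PP_le.
rewrite -(sqrt_sqrt _ (pos_INR m)) in PP_le.
have s_gt0 : (0 < sqrt (INR m))%R by apply/sqrt_lt_R0/lt_0_INR/ltP.
have C_ge0 := pos_INR 'C(m, m./2).
have P_ge0 : (0 <= 2 ^ m)%R by apply: pow_le; lra.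
move: PP_le s_gt0 C_ge0 P_ge0.
set C := INR 'C(_, _); set P := (2 ^ m)%R; set s := sqrt _.
move=> PP_le s_gt0 C_ge0 P_ge0; apply: (Rmult_le_reg_r s) => //.
have -> : (1 / 2 * P / s * s = P / 2)%R by field; lra.
have Cs_ge0 : (0 <= C * s)%R by apply: Rmult_le_pos; lra.
apply: Rnot_lt_le => lt_Cs; nra.
Qed.

Theorem proposition1 :
  exists c : R, (0 < c)%R /\
    forall m n : nat, (1 <= m)%N -> (m./2 + m <= n)%N ->
      exists L : prefsys m n,
        (c * (2 ^ m) / sqrt (INR m) <= INR (num_eff_images L))%R.
Proof.
exists (1/2)%R; split; first lra.
move=> m [|n] m_gt0 le_mn; first by move: le_mn m_gt0; lia.
exists (swap_prefs m n m./2).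
apply: Rle_trans (bin_mid_real_lb m_gt0) _.
exact/le_INR/leP/bin_le_num_eff_images.
Qed.
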